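(* In any execution of the algorithm described in the context, for every round $r$ there is at most one binary value $b\in\{0,1\}$ for which there exist signed $\mathrm{AUX}[r](b)$ messages from at least $n-t$ different processes.
   Context: Model. There are $n$ processes $p_1,\dots,p_n$ ($i$ is the index of $p_i$) communicating over an asynchronous, reliable, point-to-point network: every pair of processes is connected by a channel, message delays are finite but unbounded, and the network does not lose, duplicate, modify or create messages. ''Broadcast'' means sending the message to every process (including oneself). Messages are signed with unforgeable digital signatures ($\langle m\rangle_j$ denotes message $m$ signed by $p_j$); malformed messages or messages with invalid signatures are ignored. Up to $t$ processes are Byzantine (faulty) and may behave arbitrarily and collude, but cannot forge signatures of other processes; the remaining processes are non-faulty and follow the algorithm. It is assumed that $t<n/3$. Algorithm. Messages are of the form $\mathrm{AUX}[r](v)$ with round $r\in\mathbb{N}$ and $v\in\{0,1\}$, sent as a pair $(\langle \mathrm{AUX}[r](v)\rangle_j,\mathit{proofs})$ where $\mathit{proofs}$ is a set of signed AUX messages. The predicate $\mathsf{is\_valid}(r,est,\mathit{proofs})$ is: if $r=0$ return true; if $r=1$ return true iff $\mathit{proofs}$ contains signed $\mathrm{AUX}[0](est)$ messages from $t+1$ different processes; otherwise let $b=(r-1)\bmod 2$; if $est=b$, return true iff ($r=2$ and $\mathit{proofs}$ contains signed $\mathrm{AUX}[0](b)$ from $t+1$ different processes) or ($\mathit{proofs}$ contains signed $\mathrm{AUX}[r-2](b)$ from $n-t$ different processes); if $est\neq b$, return true iff $\mathit{proofs}$ contains signed $\mathrm{AUX}[r-1](\neg b)$ from $n-t$ different processes.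 Each process $p_i$ with proposal $v_i$ keeps a round counter $r_i$, a set $\mathit{aux\_values}_i$ of signed AUX messages, and timers indexed by naturals (timers $2r$ and $2r+1$ belong to round $r$; starting an already started or expired timer does nothing). It sets $r_i:=0$, $\mathit{aux\_values}_i:=\emptyset$, broadcasts $(\langle\mathrm{AUX}[0](v_i)\rangle_i,\emptyset)$, then repeats forever: (1) $r_i:=r_i+1$; (2) if $i=r_i\bmod n$ (coordinator), run Broadcast; (3) start timer $2r_i$ and wait until it expires; (4) if $i\ne r_i\bmod n$, run Broadcast; (5) wait until $\mathit{aux\_values}_i$ contains round-$r_i$ AUX messages from $n-t$ different processes; (6) start timer $2r_i+1$ and wait until it expires; (7) with $b_i=r_i\bmod 2$, if $\mathit{aux\_values}_i$ contains $\mathrm{AUX}[r_i](b_i)$ from $n-t$ different processes, decide $b_i$ (if not yet decided). Broadcast: let $\mathit{values}_i$ be the set of $v\in\{0,1\}$ such that $\mathsf{is\_valid}(r_i,v,S)$ holds for some $S\subseteq\mathit{aux\_values}_i$; let $bv=(r_i+1)\bmod 2$; if $p_i$ received from $p_{r_i\bmod n}$ a message $(\langle\mathrm{AUX}[r_i](p)\rangle_{r_i\bmod n},\cdot)$ with $p\in\mathit{values}_i$ then $est_i:=p$, else if $bv\in\mathit{values}_i$ then $est_i:=bv$, else $est_i:=\neg bv$; choose $\mathit{proofs}\subseteq\mathit{aux\_values}_i$ with $\mathsf{is\_valid}(r_i,est_i,\mathit{proofs})$ and broadcast $(\langle\mathrm{AUX}[r_i](est_i)\rangle_i,\mathit{proofs})$.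 On receiving $(\langle\mathrm{AUX}[r_j](est_j)\rangle_j,\mathit{proofs})$: if $\mathsf{is\_valid}(r_j,est_j,\mathit{proofs})$, add the signed message and the messages of $\mathit{proofs}$ needed to satisfy the predicate to $\mathit{aux\_values}_i$ (such messages are called valid). Then let $\rho_i$ be the largest round for which $\mathit{aux\_values}_i$ contains messages from $t+1$ different processes, and set every timer with index $\le 2\rho_i$ to expired. *)

From mathcomp Require Import all_boot.
Set Implicit Arguments. Unset Strict Implicit. Unset Printing Implicit Defensive.

(* Processes are p_1 .. p_n, identified by their index i (1 <= i <= n).
   Binary values are booleans: 0 = false, 1 = true. *)

(* A signed message <AUX[r](v)>_j is the triple (j, r, v). *)
Definition sig := (nat * nat * bool)%type.
Definition signer (s : sig) : nat := s.1.1.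
Definition srnd (s : sig) : nat := s.1.2.
Definition sval (s : sig) : bool := s.2.

(* A sent message: (signed AUX message, proofs). *)
Definition packet := (sig * seq sig)%type.

Definition nsigners (P : pred sig) (S : seq sig) : nat :=
  size (undup [seq signer s | s <- S & P s]).

Definition quorum (k r : nat) (v : bool) (S : seq sig) : bool :=
  k <= nsigners (fun s => (srnd s == r) && (sval s == v)) S.

Definition round_quorum (k r : nat) (S : seq sig) : bool :=
  k <= nsigners (fun s => srnd s == r) S.

Definition bit (x : nat) : bool := x %% 2 == 1.

Definition is_valid (n t r : nat) (est : bool) (proofs : seq sig) : bool :=
  if r == 0 then true
  else if r == 1 then quorum t.+1 0 est proofs
  else let b := bit (r - 1) in
       if est == b then ((r == 2) && quorum t.+1 0 b proofs)
                        || quorum (n - t) (r - 2) b proofs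
       else quorum (n - t) (r - 1) (~~ b) proofs.

(* the messages of proofs needed to satisfy the predicate *)
Definition needed (r : nat) (est : bool) (proofs : seq sig) : seq sig :=
  [seq s <- proofs |
    if r == 0 then false
    else if r == 1 then (srnd s == 0) && (sval s == est)
    else let b := bit (r - 1) in
         if est == b then ((r == 2) && (srnd s == 0) && (sval s == b))
                          || ((srnd s == r - 2) && (sval s == b))
         else (srnd s == r - 1) && (sval s == ~~ b)].

(* program points of a non-faulty process:
   PInit   : before the initial broadcast of AUX[0](v_i)
   PStep1  : at the beginning of an iteration (step (1))
   PWaitT1 : waiting for timer 2r to expire (step (3)), then step (4)
   PWaitQ  : waiting for n-t round-r AUX messages (step (5)), then step (6)
   PWaitT2 : waiting for timer 2r+1 to expire (step (6)), then step (7) *)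
Inductive phase := PInit | PStep1 | PWaitT1 | PWaitQ | PWaitT2.

Record lstate := LState {
  phase_of : phase;
  rnd : nat;
  aux : seq sig;
  rcvd : seq (nat * sig);        (* (sender, signed message) of every received message *)
  started : nat -> Prop;
  expired : nat -> Prop;
  decided : option bool;
  proposal : bool
}.

Record config := Config {
  local : nat -> lstate;
  net : seq (nat * nat * packet);        (* in-transit (sender, receiver, message) *)
  created : seq sig
}.

Definition init_lstate (v : bool) : lstate :=
  LState PInit 0 [::] [::] (fun _ => False) (fun _ => False) None v.

Definition init_config (v : nat -> bool) : config :=
  Config (fun i => init_lstate (v i)) [::] [::].

Definition upd (f : nat -> lstate) (i : nat) (l : lstate) : nat -> lstate :=
  fun j => if j == i then l else f j.

Definition is_proc (n i : nat) : bool := (1 <= i) && (i <= n).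
Definition correct (n : nat) (F : nat -> bool) (i : nat) : bool :=
  is_proc n i && ~~ F i.

Definition sendall (n i : nat) (m : packet) : seq (nat * nat * packet) :=
  [seq (i, j, m) | j <- iota 1 n].

Definition in_values (n t : nat) (l : lstate) (r : nat) (v : bool) : Prop :=
  exists S : seq sig, {subset S <= aux l} /\ is_valid n t r v S.

(* choice of est_i in the Broadcast procedure; the coordinator of round r is
   p_(r mod n) *)
Definition est_choice (n t : nat) (l : lstate) (r : nat) (est : bool) : Prop :=
  let c := r %% n in
  let bv := bit (r + 1) in
  (exists p, (c, (c, r, p)) \in rcvd l /\ in_values n t l r p /\ est = p)
  \/ ((forall p, (c, (c, r, p)) \in rcvd l -> ~ in_values n t l r p)
      /\ (in_values n t l r bv -> est = bv)
      /\ (~ in_values n t l r bv -> est = ~~ bv)).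

Definition bcast_ok (n t : nat) (l : lstate) (r : nat) (est : bool)
  (proofs : seq sig) : Prop :=
  est_choice n t l r est /\ {subset proofs <= aux l} /\ is_valid n t r est proofs.

Definition set_phase_rnd_start (l : lstate) (p : phase) (r : nat) (x : nat) : lstate :=
  LState p r (aux l) (rcvd l) (fun y => started l y \/ y = x) (expired l)
         (decided l) (proposal l).

Definition set_phase (l : lstate) (p : phase) : lstate :=
  LState p (rnd l) (aux l) (rcvd l) (started l) (expired l) (decided l) (proposal l).

Definition do_decide (n t : nat) (l : lstate) : lstate :=
  let b := bit (rnd l) in
  LState PStep1 (rnd l) (aux l) (rcvd l) (started l) (expired l)
    (if (decided l == None) && quorum (n - t) (rnd l) b (aux l)
     then Some b else decided l) (proposal l).

Definition expire (l : lstate) (x : nat) : lstate :=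
  LState (phase_of l) (rnd l) (aux l) (rcvd l) (started l)
         (fun y => expired l y \/ y = x) (decided l) (proposal l).

Definition receive (n t : nat) (l : lstate) (j : nat) (m : packet) : lstate :=
  let aux' := if is_valid n t (srnd m.1) (sval m.1) m.2
              then m.1 :: needed (srnd m.1) (sval m.1) m.2 ++ aux l
              else aux l in
  LState (phase_of l) (rnd l) aux' ((j, m.1) :: rcvd l) (started l)
    (fun x => expired l x \/ exists rho, round_quorum t.+1 rho aux' /\ x <= 2 * rho)
    (decided l) (proposal l).

(* one step of the whole system; F is the set of Byzantine processes *)
Inductive step (n t : nat) (F : nat -> bool) : config -> config -> Prop :=
| st_init c i : correct n F i -> phase_of (local c i) = PInit ->
    let l := local c i in
    let m := ((i, 0, proposal l), [::]) in
    step n t F c (Config (upd (local c) i (set_phase l PStep1))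
                         (net c ++ sendall n i m) (m.1 :: created c))
| st_round_coord c i est proofs : correct n F i ->
    phase_of (local c i) = PStep1 ->
    let l := local c i in let r := (rnd l).+1 in
    i = r %% n ->
    bcast_ok n t l r est proofs ->
    let m := ((i, r, est), proofs) in
    step n t F c (Config (upd (local c) i (set_phase_rnd_start l PWaitT1 r (2 * r)))
                         (net c ++ sendall n i m) (m.1 :: created c))
| st_round_noncoord c i : correct n F i ->
    phase_of (local c i) = PStep1 ->
    let l := local c i in let r := (rnd l).+1 in
    i <> r %% n ->
    step n t F c (Config (upd (local c) i (set_phase_rnd_start l PWaitT1 r (2 * r)))
                         (net c) (created c))
| st_t1_coord c i : correct n F i ->
    phase_of (local c i) = PWaitT1 ->
    let l := local c i in
    expired l (2 * rnd l) -> i = rnd l %% n ->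
    step n t F c (Config (upd (local c) i (set_phase l PWaitQ)) (net c) (created c))
| st_t1_noncoord c i est proofs : correct n F i ->
    phase_of (local c i) = PWaitT1 ->
    let l := local c i in
    expired l (2 * rnd l) -> i <> rnd l %% n ->
    bcast_ok n t l (rnd l) est proofs ->
    let m := ((i, rnd l, est), proofs) in
    step n t F c (Config (upd (local c) i (set_phase l PWaitQ))
                         (net c ++ sendall n i m) (m.1 :: created c))
| st_quorum c i : correct n F i ->
    phase_of (local c i) = PWaitQ ->
    let l := local c i in
    round_quorum (n - t) (rnd l) (aux l) ->
    step n t F c (Config (upd (local c) i
                            (set_phase_rnd_start l PWaitT2 (rnd l) (2 * rnd l).+1))
                         (net c) (created c))
| st_t2 c i : correct n F i ->
    phase_of (local c i) = PWaitT2 ->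
    let l := local c i in
    expired l (2 * rnd l).+1 ->
    step n t F c (Config (upd (local c) i (do_decide n t l)) (net c) (created c))
| st_timer c i x : correct n F i ->
    started (local c i) x ->
    step n t F c (Config (upd (local c) i (expire (local c i) x)) (net c) (created c))
| st_deliver c j k m : (j, k, m) \in net c ->
    step n t F c (Config (if correct n F k
                          then upd (local c) k (receive n t (local c k) j m)
                          else local c)
                         (rem (j, k, m) (net c)) (created c))
| st_byz_sign c j r v : is_proc n j -> F j ->
    step n t F c (Config (local c) (net c) ((j, r, v) :: created c))
| st_byz_send c j k m : is_proc n j -> F j -> is_proc n k ->
    m.1 \in created c -> all (fun s => s \in created c) m.2 ->
    step n t F c (Config (local c) ((j, k, m) :: net c) (created c)).

Inductive reachable (n t : nat) (F : nat -> bool) (v : nat -> bool) : config -> Prop :=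
| reach0 : reachable n t F v (init_config v)
| reachS c c' : reachable n t F v c -> step n t F c c' -> reachable n t F v c'.

From Pilot Require Import Defs.
From mathcomp Require Import all_boot zify.

(* A correct process signs at most one AUX message per round: it signs only
   in Broadcast, once per round, and its round counter never decreases.  Two
   sets of n - t signers among p_1 .. p_n share at least n - 2t > t processes,
   hence a correct one, which then signed the same value in both. *)

Lemma leq_size_add_inter {T : eqType} {U A B : seq T} :
  uniq A -> uniq B -> {subset A <= U} -> {subset B <= U} ->
  size A + size B <= size U + size [seq x <- B | x \in A].
Proof.
move=> uA uB sAU sBU.
have : size (A ++ [seq x <- B | x \notin A]) <= size U.
  apply: uniq_leq_size => [|x].
    rewrite cat_uniq uA filter_uniq // andbT; apply/hasPn => x.
    by rewrite mem_filter => /andP [].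
  by rewrite mem_cat mem_filter => /orP [/sAU | /andP [_ /sBU]].
rewrite !size_cat !size_filter -(count_predC (fun x => x \in A) B).
by rewrite addnCA [size U + _]addnC leq_add2l.
Qed.

Lemma leq_count_uniq {T : eqType} (P : pred T) {s1 s2 : seq T} :
  uniq s1 -> {subset s1 <= s2} -> count P s1 <= count P s2.
Proof.
move=> us1 s12; rewrite -!size_filter; apply: uniq_leq_size.
  exact: filter_uniq.
by move=> x; rewrite !mem_filter => /andP [-> /s12].
Qed.

Lemma quorums_share_nonfaulty {n t : nat} {F : pred nat} {A B : seq nat} :
  count F (iota 1 n) <= t -> n + t < size A + size B ->
  uniq A -> uniq B -> {subset A <= iota 1 n} -> {subset B <= iota 1 n} ->
  exists2 x, x \in A & (x \in B) && ~~ F x.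
Proof.
move=> leFt ltAB uA uB sA sB.
set AB := [seq x <- B | x \in A].
have sAB : {subset AB <= iota 1 n} by move=> x; rewrite mem_filter => /andP [_ /sB].
have ltFAB : count F AB < size AB.
  have := leq_size_add_inter uA uB sA sB; rewrite size_iota -/AB => leABn.
  apply: leq_ltn_trans (leq_count_uniq F (filter_uniq _ uB) sAB) _.
  by apply: leq_ltn_trans leFt _; rewrite -(ltn_add2l n) (leq_trans ltAB leABn).
have /hasP [x] : has (predC F) AB.
  by rewrite has_count -(ltn_add2l (count F AB)) count_predC addn0.
by rewrite mem_filter => /andP [xA xB] nFx; exists x; rewrite // xB.
Qed.

Definition signers (P : pred sig) (S : seq sig) : seq nat :=
  undup [seq signer s | s <- S & P s].

Lemma signersP (P : pred sig) (S : seq sig) (x : nat) :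
  reflect (exists2 s, s \in S & P s /\ signer s = x) (x \in signers P S).
Proof.
rewrite mem_undup; apply: (iffP mapP) => [[s] | [s s_in [Ps <-]]].
  by rewrite mem_filter => /andP [Ps s_in] ->; exists s.
by exists s; rewrite // mem_filter Ps.
Qed.

Lemma is_proc_iota (n i : nat) : is_proc n i = (i \in iota 1 n).
Proof. by rewrite mem_iota add1n ltnS. Qed.

(* The least round in which a correct process in state [l] may still sign: in
   [PWaitT1] the coordinator has already broadcast for round [rnd l], the
   other processes have not. *)
Definition sign_bound (n i : nat) (l : lstate) : nat :=
  match phase_of l with
  | PInit => 0
  | PWaitT1 => if i == rnd l %% n then (rnd l).+1 else rnd l
  | _ => (rnd l).+1
  end.

Record honest_signing (n : nat) (F : nat -> bool) (c : config) : Prop := {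
  signer_is_proc : forall s, s \in created c -> is_proc n (signer s);
  signed_below_bound : forall s, s \in created c -> correct n F (signer s) ->
    srnd s < sign_bound n (signer s) (local c (signer s));
  signed_once : forall s1 s2, s1 \in created c -> s2 \in created c ->
    correct n F (signer s1) -> signer s1 = signer s2 -> srnd s1 = srnd s2 ->
    s1 = s2
}.

Definition bounds_grow (n : nat) (F : nat -> bool) (L L' : nat -> lstate) :=
  forall i, correct n F i -> sign_bound n i (L i) <= sign_bound n i (L' i).

Lemma bounds_grow_refl n F L : bounds_grow n F L L.
Proof. by move=> i _. Qed.

Lemma bounds_grow_upd n F L i l :
  (correct n F i -> sign_bound n i (L i) <= sign_bound n i l) ->
  bounds_grow n F L (upd L i l).
Proof. by move=> le_il k; rewrite /upd; case: eqP => [-> //|_ _]. Qed.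

Section HonestSigningStep.

Context {n : nat} {F : nat -> bool} {c : config}.
Hypothesis Hc : honest_signing n F c.

Lemma honest_signing_frame L N :
  bounds_grow n F (local c) L -> honest_signing n F (Config L N (created c)).
Proof.
case: Hc => Hproc Hbound Honce grow; split => //= s s_in cs.
exact: leq_trans (Hbound s s_in cs) (grow _ cs).
Qed.

Lemma honest_signing_sign L N j r e :
  is_proc n j -> bounds_grow n F (local c) L ->
  (correct n F j ->
     sign_bound n j (local c j) <= r < sign_bound n j (L j)) ->
  honest_signing n F (Config L N ((j, r, e) :: created c)).
Proof.
case: Hc => Hproc Hbound Honce pj grow new_ok.
have old_below s : s \in created c -> signer s = j -> correct n F j -> srnd s < r.
  move=> s_in sj cs; have /andP [le_r _] := new_ok cs.
  by apply: leq_trans le_r; rewrite -sj; apply: Hbound; rewrite // sj.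
split => /= [s | s | s1 s2].
- by rewrite in_cons => /predU1P [-> | /Hproc].
- rewrite in_cons => /predU1P [-> /new_ok /andP [] // | s_in cs].
  exact: leq_trans (Hbound s s_in cs) (grow _ cs).
- rewrite !in_cons => /predU1P [-> | s1_in] /predU1P [-> | s2_in] //= cs sj sr.
  + by have := old_below s2 s2_in (esym sj) cs; rewrite -sr ltnn.
  + by move: cs; rewrite sj => /(old_below s1 s1_in sj); rewrite sr ltnn.
  + exact: Honce.
Qed.

Lemma honest_signing_upd i l N :
  (correct n F i -> sign_bound n i (local c i) <= sign_bound n i l) ->
  honest_signing n F (Config (upd (local c) i l) N (created c)).
Proof. by move=> le_il; apply: honest_signing_frame; apply: bounds_grow_upd. Qed.

Lemma honest_signing_sign_upd i l N r e :
  correct n F i -> sign_bound n i (local c i) <= r < sign_bound n i l ->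
  honest_signing n F (Config (upd (local c) i l) N ((i, r, e) :: created c)).
Proof.
move=> ci ri; apply: honest_signing_sign.
- by case/andP: ci.
- by apply: bounds_grow_upd => _; case/andP: ri => le_r /ltnW; apply: leq_trans.
- by rewrite /upd eqxx.
Qed.

End HonestSigningStep.

Lemma honest_signing_step n t F c c' :
  honest_signing n F c -> step n t F c c' -> honest_signing n F c'.
Proof.
move=> Hc st; case: st Hc => {c c'}.
- move=> c i ci ph /= Hc; apply: (honest_signing_sign_upd Hc) => //.
  by rewrite /sign_bound ph.
- move=> c i e proofs ci ph /= coord _ Hc; apply: (honest_signing_sign_upd Hc) => //.
  by rewrite /sign_bound ph /= -coord eqxx leqnn ltnSn.
- move=> c i ci ph /= ncoord Hc; apply: (honest_signing_upd Hc) => _.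
  by rewrite /sign_bound ph /=; case: eqP.
- move=> c i ci ph /= _ coord Hc; apply: (honest_signing_upd Hc) => _.
  by rewrite /sign_bound ph /= -coord eqxx.
- move=> c i e proofs ci ph /= _ ncoord _ Hc; apply: (honest_signing_sign_upd Hc) => //.
  by rewrite /sign_bound ph /=; case: eqP => // _; rewrite leqnn ltnSn.
- move=> c i ci ph /= _ Hc; apply: (honest_signing_upd Hc) => _.
  by rewrite /sign_bound ph.
- move=> c i ci ph /= _ Hc; apply: (honest_signing_upd Hc) => _.
  by rewrite /sign_bound ph.
- by move=> c i x ci _ Hc; apply: (honest_signing_upd Hc).
- move=> c j k m _ Hc /=; case: ifP => _.
    exact: (honest_signing_upd Hc).
  by apply: (honest_signing_frame Hc); apply: bounds_grow_refl.
- move=> c j r e pj Fj Hc; apply: (honest_signing_sign Hc) => //.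
  by rewrite /correct Fj andbF.
- by move=> c j k m _ _ _ _ _ [].
Qed.

Lemma honest_signing_reachable n t F v c :
  reachable n t F v c -> honest_signing n F c.
Proof.
elim=> [|c1 c2 _ IH st]; last exact: honest_signing_step IH st.
by split.
Qed.

Theorem lemma1 (n t : nat) (F : nat -> bool) (v : nat -> bool) (c : config) :
  3 * t < n ->
  count F (iota 1 n) <= t ->
  reachable n t F v c ->
  forall (r : nat) (b1 b2 : bool),
    quorum (n - t) r b1 (created c) ->
    quorum (n - t) r b2 (created c) ->
    b1 = b2.
Proof.
move=> lt3tn leFt /honest_signing_reachable [proc_signer _ signed_once] r b1 b2.
pose at_r b s := (srnd s == r) && (Defs.sval s == b).
have signers_procs b : {subset signers (at_r b) (created c) <= iota 1 n}.
  by move=> x /signersP [s /proc_signer + [_ <-]]; rewrite is_proc_iota.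
move=> q1 q2; have lt_quorums : n + t < size (signers (at_r b1) (created c))
                               + size (signers (at_r b2) (created c)).
  by apply: leq_trans (leq_add q1 q2); lia.
have [x /signersP [s1 s1_in [/andP [/eqP r1 /eqP <-] x1]]] :=
  quorums_share_nonfaulty leFt lt_quorums (undup_uniq _) (undup_uniq _)
    (signers_procs b1) (signers_procs b2).
case/andP => /signersP [s2 s2_in [/andP [/eqP r2 /eqP <-] x2]] nFx.
have cx : correct n F (signer s1) by rewrite /correct proc_signer // x1.
by rewrite (signed_once s1 s2) // ?x1 ?x2 ?r1 ?r2.
Qed.
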